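(* Let $k<n$. No location-allocation mechanism $M_A$ that is allocation-anonymous is DIC.
   Context: There are $n$ agents $N=\{1,\dots,n\}$ with locations $x_i\in[0,1]$, profile $\boldsymbol{x}$; the facility has capacity $k$ (positive integer). Let $N_k=\{A\subseteq N: 0<|A|\le k\}$. A location-allocation mechanism is a function $M_A:[0,1]^n\to[0,1]\times N_k$, written $M_A(\boldsymbol{x})=(s_{\boldsymbol{x}},A_{\boldsymbol{x}})$, choosing from the reported locations a facility location and a set of agents allowed to be served. Agent $i$ with true location $x_i$ gets utility $1-|s-x_i|$ from outcome $(s,A)$ if $i\in A$, and $0$ if $i\notin A$. $M_A$ is DIC if for every agent $i$, every true location $x_i$, every report $x_i'$ and every reports $\hat{\boldsymbol{x}}_{-i}$ of the other agents, agent $i$'s utility from $M_A(x_i,\hat{\boldsymbol{x}}_{-i})$ is at least its utility from $M_A(x_i',\hat{\boldsymbol{x}}_{-i})$. A profile $\boldsymbol{x}$ is $i$-identifiable if $x_i\ne x_j$ for all $j\ne i$. $M_A$ is allocation-anonymous if for all distinct $i,j\in N$ and every $i$-identifiable profile $\boldsymbol{x}$, letting $\boldsymbol{x}'$ be obtained from $\boldsymbol{x}$ by swapping the locations of $i$ and $j$ ($x_i'=x_j$, $x_j'=x_i$, $x_\ell'=x_\ell$ otherwise), we have $i\in A_{\boldsymbol{x}}$ if and only if $j\in A_{\boldsymbol{x}'}$. *)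

From HB Require Import structures.
From mathcomp Require Import all_boot all_order all_algebra.
From mathcomp Require Import reals.
Set Implicit Arguments. Unset Strict Implicit. Unset Printing Implicit Defensive.
Import Order.TTheory GRing.Theory Num.Theory.
Local Open Scope ring_scope.

Definition profile (R : realType) (n : nat) := {ffun 'I_n -> R}.

(* Outcome: facility location and set of served agents. *)
Definition mechanism (R : realType) (n : nat) := profile R n -> R * {set 'I_n}.

Definition in01 (R : realType) (x : R) : Prop := 0 <= x <= 1.

Definition valid_profile (R : realType) (n : nat) (x : profile R n) : Prop :=
  forall i, in01 (x i).

Definition la_mechanism (R : realType) (n k : nat) (M : mechanism R n) : Prop :=
  forall x : profile R n, valid_profile x ->
    in01 (M x).1 /\ (0 < #|(M x).2| <= k)%N.

Definition utility (R : realType) (n : nat) (o : R * {set 'I_n}) (i : 'I_n) (xi : R) : R :=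
  if i \in o.2 then 1 - `|o.1 - xi| else 0.

Definition upd (R : realType) (n : nat) (xhat : profile R n) (i : 'I_n) (v : R) : profile R n :=
  [ffun j => if j == i then v else xhat j].

Definition DIC (R : realType) (n : nat) (M : mechanism R n) : Prop :=
  forall (i : 'I_n) (xi xi' : R) (xhat : profile R n),
    in01 xi -> in01 xi' -> valid_profile xhat ->
    utility (M (upd xhat i xi')) i xi <= utility (M (upd xhat i xi)) i xi.

Definition identifiable (R : realType) (n : nat) (i : 'I_n) (x : profile R n) : Prop :=
  forall j, j != i -> x i != x j.

Definition swap_prof (R : realType) (n : nat) (x : profile R n) (i j : 'I_n) : profile R n :=
  [ffun l => if l == i then x j else if l == j then x i else x l].

Definition allocation_anonymous (R : realType) (n : nat) (M : mechanism R n) : Prop :=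
  forall (i j : 'I_n), i != j -> forall x : profile R n, valid_profile x ->
    identifiable i x ->
    (i \in (M x).2) = (j \in (M (swap_prof x i j)).2).

From mathcomp Require Import all_boot all_order all_algebra.
From mathcomp Require Import reals.
From mathcomp Require Import lra.
Set Implicit Arguments. Unset Strict Implicit. Unset Printing Implicit Defensive.
Import Order.TTheory GRing.Theory Num.Theory.
Local Open Scope ring_scope.

(* An agent located strictly inside [0, 1] gets positive utility whenever it is
   served, so under DIC its service cannot depend on its report as long as that
   report lies in (0, 1).  At the constant profile, moving one agent slightly
   makes it identifiable, and anonymity then forces all agents to be served
   alike: the served set is empty or everything, contradicting 0 < |A| <= k < n. *)

Section ServedSet.

Variables (R : realType) (n : nat).
Implicit Types (p : profile R n) (i j : 'I_n) (t v c : R).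

Lemma valid_upd p i v : valid_profile p -> in01 v -> valid_profile (upd p i v).
Proof. by move=> vp v01 j; rewrite ffunE; case: ifP. Qed.

Lemma in01_interior t : 0 < t < 1 -> in01 t.
Proof. by case/andP=> t0 t1; apply/andP; split; lra. Qed.

Variables (k : nat) (M : mechanism R n).
Hypotheses (M_la : la_mechanism k M) (M_DIC : DIC M).

Lemma DIC_served_truthful p i t v :
  valid_profile p -> 0 < t < 1 -> in01 v ->
  i \in (M (upd p i v)).2 -> i \in (M (upd p i t)).2.
Proof.
move=> vp t_int v01 served_v; have /andP[t0 t1] := t_int.
have := @M_DIC i t v p (in01_interior t_int) v01 vp.
apply: contraTT => not_served; rewrite /utility (negbTE not_served) served_v -ltNge.
have [/andP[s0 s1] _] := M_la (valid_upd i vp v01).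
have : `|(M (upd p i v)).1 - t| < 1 by rewrite ltr_norml; apply/andP; split; lra.
lra.
Qed.

Lemma DIC_served_interior p i t v :
  valid_profile p -> 0 < t < 1 -> 0 < v < 1 ->
  (i \in (M (upd p i t)).2) = (i \in (M (upd p i v)).2).
Proof.
move=> vp t_int v_int; apply/idP/idP; apply: DIC_served_truthful => //;
  exact: in01_interior.
Qed.

Definition const_profile c : profile R n := [ffun=> c].

Lemma valid_const_profile c : in01 c -> valid_profile (const_profile c).
Proof. by move=> c01 i; rewrite ffunE. Qed.

Lemma upd_const_profile c i : upd (const_profile c) i c = const_profile c.
Proof. by apply/ffunP => j; rewrite !ffunE; case: ifP. Qed.

Lemma identifiable_upd_const c i t : t != c -> identifiable i (upd (const_profile c) i t).
Proof. by move=> tc j ji; rewrite !ffunE eqxx (negbTE ji). Qed.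

Lemma swap_upd_const c i j t :
  swap_prof (upd (const_profile c) i t) i j = upd (const_profile c) j t.
Proof.
apply/ffunP => l; rewrite !ffunE eqxx.
by case: (eqVneq l i) => [->|li] //; rewrite eq_sym.
Qed.

Hypothesis M_anon : allocation_anonymous M.

Lemma served_const_profile c t : 0 < c < 1 -> 0 < t < 1 -> t != c ->
  forall i j, (i \in (M (const_profile c)).2) = (j \in (M (const_profile c)).2).
Proof.
move=> c_int t_int tc i j; have [->//|ij] := eqVneq i j.
have vc := valid_const_profile (in01_interior c_int).
have served_dev l : (l \in (M (const_profile c)).2) = (l \in (M (upd (const_profile c) l t)).2).
  by rewrite -{1}(upd_const_profile c l) (DIC_served_interior l vc c_int t_int).
rewrite !served_dev (M_anon ij (valid_upd i vc (in01_interior t_int))).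
  by rewrite swap_upd_const.
exact: identifiable_upd_const.
Qed.

End ServedSet.

Lemma set0_or_setT (T : finType) (A : {set T}) :
  (forall x y, (x \in A) = (y \in A)) -> A = set0 \/ A = setT.
Proof.
move=> A_const; have [->|/set0Pn[x xA]] := eqVneq A set0; first by left.
right; apply/setP => y; by rewrite in_setT -(A_const x).
Qed.

Theorem theorem5p3 (R : realType) (n k : nat) :
  (0 < k)%N -> (k < n)%N ->
  forall M : mechanism R n,
    la_mechanism k M -> allocation_anonymous M -> ~ DIC M.
Proof.
move=> _ kn M M_la M_anon M_DIC.
have half_int : 0 < (1 / 2 : R) < 1 by apply/andP; split; lra.
have quarter_int : 0 < (1 / 4 : R) < 1 by apply/andP; split; lra.
have quarter_half : (1 / 4 : R) != 1 / 2 by apply/eqP; lra.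
have [_ /andP[card_pos card_le_k]] :=
  M_la _ (valid_const_profile (in01_interior half_int)).
have [A0|AT] := set0_or_setT
  (served_const_profile M_la M_DIC M_anon half_int quarter_int quarter_half).
- by rewrite A0 cards0 in card_pos.
- by move: (leq_ltn_trans card_le_k kn); rewrite AT cardsT card_ord ltnn.
Qed.
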